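(* For every $\rho>0$ and every $\rho$-patch $\mathcal P$ of $V$, $$\nu(B_{\mathcal P})=\prod_p\Big(1-\frac{|\mathcal P_p|}{p^2}\Big).$$
   Context: Throughout, $p$ denotes a prime. $V=\{x\in\mathbb Z^2:\gcd(x_1,x_2)=1\}$. For $X\subset\mathbb Z^2$, $X_p$ is the image of $X$ in $\mathbb Z^2/p\mathbb Z^2$. Subsets of $\mathbb Z^2$ are identified with elements of $\{0,1\}^{\mathbb Z^2}$ (product topology), and $\mathbb X_V:=\overline{\{t+V:t\in\mathbb Z^2\}}$, which equals the set of $A\subset\mathbb Z^2$ with $|A_p|<p^2$ for all $p$. A $\rho$-patch of $V$ is a set $(V-t)\cap B_\rho(0)$, $t\in\mathbb Z^2$; the cylinder set $C_{\mathcal P}$ is $\{X\in\mathbb X_V: X\cap B_\rho(0)=\mathcal P\}$, and $B_{\mathcal P}:=\{X\in\mathbb X_V: \mathcal P\subset X\cap B_\rho(0)\}$. $\nu$ is the unique Borel probability measure on $\mathbb X_V$ with $\nu(C_{\mathcal P})$ equal to the natural density of $\{t\in\mathbb Z^2:(V-t)\cap B_\rho(0)=\mathcal P\}$; this density is known to equal $\sum_{\mathcal F\subset(\mathbb Z^2\cap B_\rho(0))\setminus\mathcal P}(-1)^{|\mathcal F|}\prod_p\big(1-|(\mathcal P\cup\mathcal F)_p|/p^2\big)$. *)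

From Stdlib Require Import Reals ZArith Znumtheory List.
Import ListNotations.
Open Scope R_scope.

Definition pt := (Z * Z)%type.

Definition pt_eq_dec : forall x y : pt, {x = y} + {x <> y}.
Proof. decide equality; apply Z.eq_dec. Defined.

Definition pt_eqb (x y : pt) : bool := if pt_eq_dec x y then true else false.

Definition pt_add (x y : pt) : pt := ((fst x + fst y)%Z, (snd x + snd y)%Z).

(* V = visible (primitive) lattice points: gcd(x1,x2) = 1. *)
Definition inV (x : pt) : bool := Z.eqb (Z.gcd (fst x) (snd x)) 1%Z.

Definition inballb (r : R) (x : pt) : bool :=
  if Rle_dec (IZR (fst x) ^ 2 + IZR (snd x) ^ 2) (r ^ 2) then true else false.

Definition zrange (K : Z) : list Z :=
  map (fun n => (Z.of_nat n - K)%Z) (seq 0 (Z.to_nat (2 * K + 1))).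

Definition ball_pts (r : R) : list pt :=
  let K := Z.abs (up r) in
  filter (inballb r) (list_prod (zrange K) (zrange K)).

(* All sublists (= all subsets, for a duplicate-free list). *)
Fixpoint subsets {A : Type} (l : list A) : list (list A) :=
  match l with
  | [] => [[]]
  | a :: l' => let s := subsets l' in map (cons a) s ++ s
  end.

Definition memb (x : pt) (Q : list pt) : bool := existsb (pt_eqb x) Q.

Definition inclb (P Q : list pt) : bool := forallb (fun x => memb x Q) P.

(* (V - t) ∩ B_r(0) = Q, for Q ⊆ Z^2 ∩ B_r(0) (x ∈ V - t iff x + t ∈ V). *)
Definition patch_eqb (r : R) (t : pt) (Q : list pt) : bool :=
  forallb (fun x => Bool.eqb (inV (pt_add x t)) (memb x Q)) (ball_pts r).

Definition is_patch (r : R) (P : list pt) : Prop :=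
  exists t : pt, forall x : pt, In x P <-> (In x (ball_pts r) /\ inV (pt_add x t) = true).

(* N-th term of the natural density (averaging over t ∈ Z^2 ∩ B_N(0)) of
   { t ∈ Z^2 : (V - t) ∩ B_r(0) = Q }. *)
Definition dens_seq (r : R) (Q : list pt) (N : nat) : R :=
  INR (length (filter (fun t => patch_eqb r t Q) (ball_pts (INR N))))
  / INR (length (ball_pts (INR N))).

(* nu(B_P) = sum of nu(C_Q) over Q with P ⊆ Q ⊆ Z^2 ∩ B_r(0),
   given the values d Q = nu(C_Q). *)
Definition nuB (r : R) (P : list pt) (d : list pt -> R) : R :=
  fold_right Rplus 0
    (map d (filter (fun Q => inclb P Q) (subsets (ball_pts r)))).

Definition card_mod (p : nat) (P : list pt) : nat :=
  length (nodup pt_eq_dec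
    (map (fun x => (Z.modulo (fst x) (Z.of_nat p), Z.modulo (snd x) (Z.of_nat p))) P)).

Definition primeb (p : nat) : bool := if prime_dec (Z.of_nat p) then true else false.

(* Partial product over primes p <= N+1 of (1 - |P_p| / p^2). *)
Definition partial_prod (P : list pt) (N : nat) : R :=
  fold_right Rmult 1
    (map (fun p => 1 - INR (card_mod p P) / (INR p ^ 2))
         (filter primeb (seq 2 N))).

(* Summing the patch densities over the patches that contain [P] shows that ν(B_P) is the
   density, in discs of growing radius [N], of the [t] with [t + P ⊆ V].  For fixed [M], call [t]
   sieved if no prime [p <= M + 1] divides both coordinates of any [t + x], [x ∈ P].  This is
   periodic modulo [m = ∏_{p <= M+1} p], so its density in the disc is its proportion among the
   residues mod [m], which by the Chinese remainder theorem is the partial product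
   [∏_{p <= M+1} (1 - |P_p| / p^2)].  Every [t] with [t + P ⊆ V] is sieved; any other sieved [t]
   has [t + x = 0] or [gcd (t + x) = g > M + 1] for some [x ∈ P], and there are [O(N^2 / g^2)]
   such points for each [g], hence [O(|P| N^2 / M)] in all.  So the partial products are within
   [32 |P| / (M + 1)] of ν(B_P). *)

From Stdlib Require Import Reals ZArith Znumtheory List Lia Lra Permutation.
Import ListNotations.
Open Scope bool_scope.

Definition count {A} (f : A -> bool) (l : list A) : nat := length (filter f l).

Lemma list_sum_cons (n : nat) (l : list nat) : list_sum (n :: l) = (n + list_sum l)%nat.
Proof. reflexivity. Qed.

Section ListSum.
Local Open Scope nat_scope.
Context {A : Type}.
Implicit Types (l : list A).

Lemma list_sum_le (u v : A -> nat) l :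
  (forall x, In x l -> (u x <= v x)%nat) -> (list_sum (map u l) <= list_sum (map v l))%nat.
Proof.
  induction l as [|a l IH]; intros H; cbn [map]; rewrite ?list_sum_cons; [cbn; lia|].
  pose proof (H a (or_introl eq_refl)). specialize (IH (fun x Hx => H x (or_intror Hx))). lia.
Qed.

Lemma list_sum_ext (u v : A -> nat) l :
  (forall x, In x l -> u x = v x) -> list_sum (map u l) = list_sum (map v l).
Proof. intros H. f_equal. apply map_ext_in, H. Qed.

Lemma list_sum_const (k : nat) l : list_sum (map (fun _ => k) l) = (k * length l)%nat.
Proof. induction l; cbn [map]; rewrite ?list_sum_cons; cbn [length list_sum fold_right]; lia. Qed.

Lemma list_sum_map_add (u v : A -> nat) l :
  list_sum (map (fun x => u x + v x) l) = (list_sum (map u l) + list_sum (map v l))%nat.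
Proof. induction l; cbn [map]; rewrite ?list_sum_cons; cbn [length list_sum fold_right]; lia. Qed.

Lemma list_sum_map_mul (k : nat) (u : A -> nat) l :
  list_sum (map (fun x => k * u x) l) = (k * list_sum (map u l))%nat.
Proof. induction l; cbn [map]; rewrite ?list_sum_cons; cbn [length list_sum fold_right]; lia. Qed.

Lemma in_le_list_sum (u : A -> nat) l a : In a l -> (u a <= list_sum (map u l))%nat.
Proof. induction l as [|b l IH]; cbn [map In]; rewrite ?list_sum_cons; [tauto|]. intros [->|H]; [lia|specialize (IH H); lia]. Qed.

End ListSum.

Section Counting.
Local Open Scope nat_scope.
Context {A : Type}.
Implicit Types (f g : A -> bool) (l : list A).

Lemma count_cons f a l : count f (a :: l) = ((if f a then 1 else 0) + count f l)%nat.
Proof. unfold count; simpl; destruct (f a); reflexivity. Qed.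

Lemma count_app f l1 l2 : count f (l1 ++ l2) = (count f l1 + count f l2)%nat.
Proof. unfold count. rewrite filter_app, length_app. reflexivity. Qed.

Lemma count_le f g l :
  (forall x, In x l -> f x = true -> g x = true) -> (count f l <= count g l)%nat.
Proof.
  induction l as [|a l IH]; intros H; rewrite ?count_cons; [cbn; lia|].
  specialize (IH (fun x Hx => H x (or_intror Hx))).
  destruct (f a) eqn:E; [rewrite (H a (or_introl eq_refl) E); lia|destruct (g a); lia].
Qed.

Lemma count_ext f g l : (forall x, In x l -> f x = g x) -> count f l = count g l.
Proof.
  intros H; apply Nat.le_antisymm; apply count_le; intros x Hx; rewrite (H x Hx); auto.
Qed.

Lemma count_eq_0 f l : (forall x, In x l -> f x = false) -> count f l = 0%nat.
Proof.
  intros H. unfold count. destruct (filter f l) as [|x r] eqn:E; [reflexivity|].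
  assert (Hx : In x (filter f l)) by (rewrite E; left; auto).
  apply filter_In in Hx. rewrite H in Hx; intuition discriminate.
Qed.

Lemma count_orb_le f g l :
  (count (fun x => f x || g x) l <= count f l + count g l)%nat.
Proof. induction l; rewrite ?count_cons; [cbn; lia|destruct (f a), (g a); cbn; lia]. Qed.

Lemma count_split f g l :
  count f l = (count (fun x => f x && g x) l + count (fun x => f x && negb (g x)) l)%nat.
Proof. induction l; rewrite ?count_cons; [reflexivity|destruct (f a), (g a); cbn; lia]. Qed.

Lemma count_filter f g l : count f (filter g l) = count (fun x => g x && f x) l.
Proof.
  induction l as [|a l IH]; [reflexivity|]. rewrite count_cons. cbn [filter].
  destruct (g a); cbn [andb]; rewrite ?count_cons, IH; reflexivity.
Qed.

Lemma Permutation_count f l l' : Permutation l l' -> count f l = count f l'.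
Proof. induction 1; rewrite ?count_cons; lia. Qed.

Lemma count_injective_le {B} f (p : B -> bool) (h : A -> B) l (l' : list B) :
  NoDup l ->
  (forall x y, In x l -> In y l -> f x = true -> f y = true -> h x = h y -> x = y) ->
  (forall x, In x l -> f x = true -> In (h x) l' /\ p (h x) = true) ->
  (count f l <= count p l')%nat.
Proof.
  intros Hnd Hinj Him. unfold count. rewrite <- (length_map h (filter f l)).
  apply NoDup_incl_length.
  - apply FinFun.Injective_map_NoDup_in; [|apply NoDup_filter; auto].
    intros x y Hx Hy. apply filter_In in Hx, Hy. apply Hinj; tauto.
  - intros z Hz. apply in_map_iff in Hz. destruct Hz as [x [<- Hx]].
    apply filter_In in Hx. apply filter_In. apply Him; tauto.
Qed.

Lemma list_sum_if_const f (k : nat) l :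
  list_sum (map (fun x => if f x then k else 0) l) = (k * count f l)%nat.
Proof. induction l as [|a l IH]; cbn [map]; rewrite ?list_sum_cons, ?count_cons; [cbn; lia|destruct (f a); lia]. Qed.

Lemma count_le_sum_cover {I} f (h : I -> A -> bool) (is : list I) l :
  (forall x, In x l -> f x = true -> exists i, In i is /\ h i x = true) ->
  (count f l <= list_sum (map (fun i => count (h i) l) is))%nat.
Proof.
  induction l as [|a l IH]; intros H; [cbn; lia|].
  rewrite count_cons, (list_sum_ext _ (fun i => (if h i a then 1 else 0) + count (h i) l)%nat)
    by (intros; apply count_cons).
  rewrite list_sum_map_add. specialize (IH (fun x Hx => H x (or_intror Hx))).
  destruct (f a) eqn:Ea; [|lia].
  destruct (H a (or_introl eq_refl) Ea) as [i [Hi Hh]].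
  pose proof (in_le_list_sum (fun i => if h i a then 1%nat else 0%nat) is i Hi) as Hge.
  cbn in Hge. rewrite Hh in Hge. lia.
Qed.

End Counting.

Lemma count_map {A B} (f : B -> bool) (h : A -> B) (l : list A) :
  count f (map h l) = count (fun x => f (h x)) l.
Proof. induction l as [|a l IH]; [reflexivity|]. cbn [map]. rewrite !count_cons, IH. reflexivity. Qed.

Lemma count_list_prod {A B} (f : A * B -> bool) (l : list A) (l' : list B) :
  count f (list_prod l l') = list_sum (map (fun a => count (fun b => f (a, b)) l') l).
Proof.
  induction l as [|a l IH]; [reflexivity|]. cbn [list_prod map]. rewrite count_app, IH, list_sum_cons. f_equal.
  apply count_map.
Qed.

Lemma list_sum_count_swap {A B} (r : A -> B -> bool) (l : list A) (l' : list B) :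
  list_sum (map (fun a => count (r a) l') l) = list_sum (map (fun b => count (fun a => r a b) l) l').
Proof.
  induction l as [|a l IH]; cbn [map]; rewrite ?list_sum_cons.
  - induction l'; cbn [map]; rewrite ?list_sum_cons; auto.
  - rewrite IH. clear IH. induction l' as [|b l' IH']; cbn [map]; rewrite ?list_sum_cons; [reflexivity|].
    rewrite !count_cons, <- IH'. destruct (r a b); cbn; lia.
Qed.


Lemma forallb_ext_in {A} (f g : A -> bool) l :
  (forall x, In x l -> f x = g x) -> forallb f l = forallb g l.
Proof. induction l; cbn; intros H; auto. rewrite H, IHl; auto. Qed.

Lemma forallb_false_In {A} (f : A -> bool) l : forallb f l = false -> exists x, In x l /\ f x = false.
Proof.
  induction l as [|a l IH]; cbn; [discriminate|]. destruct (f a) eqn:E; cbn.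
  - intros H. destruct (IH H) as [x [Hx Hf]]. eauto.
  - eauto.
Qed.

Lemma NoDup_list_prod {A B} (la : list A) (lb : list B) :
  NoDup la -> NoDup lb -> NoDup (list_prod la lb).
Proof.
  induction la as [|a la IH]; intros Ha Hb; cbn; [constructor|].
  inversion Ha; subst. apply NoDup_app.
  - apply FinFun.Injective_map_NoDup; auto. intros x y E; injection E; auto.
  - apply IH; auto.
  - intros z Hz1 Hz2. apply in_map_iff in Hz1. destruct Hz1 as [b [<- _]].
    apply in_prod_iff in Hz2. tauto.
Qed.

Lemma pt_eqb_spec x y : pt_eqb x y = true <-> x = y.
Proof. unfold pt_eqb; destruct (pt_eq_dec x y); split; congruence. Qed.

Lemma pt_eqb_refl x : pt_eqb x x = true.
Proof. apply pt_eqb_spec; reflexivity. Qed.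

Lemma pt_add_comm x t : pt_add x t = pt_add t x.
Proof. unfold pt_add. f_equal; lia. Qed.

Lemma memb_In x Q : memb x Q = true <-> In x Q.
Proof.
  unfold memb. rewrite existsb_exists. split.
  - intros [y [Hy E]]. apply pt_eqb_spec in E. subst; auto.
  - intros H. exists x; split; auto. apply pt_eqb_refl.
Qed.

Lemma memb_cons_neq x a Q : x <> a -> memb x (a :: Q) = memb x Q.
Proof.
  intros Hne. unfold memb; cbn. destruct (pt_eqb x a) eqn:E; [|reflexivity].
  apply pt_eqb_spec in E. contradiction.
Qed.

Lemma count_pt_eqb (l : list pt) c : NoDup l -> In c l -> count (fun a => pt_eqb a c) l = 1%nat.
Proof.
  induction l as [|a l IH]; intros Hnd Hc; [destruct Hc|].
  inversion Hnd; subst. rewrite count_cons. destruct Hc as [<-|Hc].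
  - rewrite pt_eqb_refl, count_eq_0; auto. intros x Hx.
    destruct (pt_eqb x a) eqn:E; auto. apply pt_eqb_spec in E; subst; contradiction.
  - rewrite IH; auto. destruct (pt_eqb a c) eqn:E; auto.
    apply pt_eqb_spec in E; subst; contradiction.
Qed.

Lemma count_memb (l Q : list pt) : NoDup l -> NoDup Q -> incl Q l -> count (fun c => memb c Q) l = length Q.
Proof.
  intros Hl HQ Hi. unfold count. apply Nat.le_antisymm; apply NoDup_incl_length.
  - apply NoDup_filter; auto.
  - intros x Hx. apply filter_In in Hx. apply memb_In; tauto.
  - auto.
  - intros x Hx. apply filter_In. split; auto. apply memb_In; auto.
Qed.

Lemma subsets_incl (l Q : list pt) : In Q (subsets l) -> incl Q l.
Proof.
  revert Q; induction l as [|a l IH]; cbn; intros Q HQ.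
  - destruct HQ as [<-|[]]; intros x [].
  - apply in_app_or in HQ. destruct HQ as [HQ|HQ].
    + apply in_map_iff in HQ. destruct HQ as [Q' [<- HQ']].
      intros x [<-|Hx]; [left; auto|right; apply (IH Q' HQ'); auto].
    + intros x Hx; right; apply (IH Q HQ); auto.
Qed.

Lemma count_subsets_indicator (l : list pt) (g : pt -> bool) : NoDup l ->
  count (fun Q => forallb (fun x => Bool.eqb (g x) (memb x Q)) l) (subsets l) = 1%nat.
Proof.
  induction l as [|a l IH]; intros Hnd; [reflexivity|].
  inversion Hnd as [|? ? Ha Hl]; subst. cbn [subsets]. rewrite count_app, count_map.
  specialize (IH Hl). set (F := fun Q => forallb (fun x => Bool.eqb (g x) (memb x Q)) l) in *.
  assert (Hout : forall Q, In Q (subsets l) -> memb a Q = false).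
  { intros Q HQ. destruct (memb a Q) eqn:E; auto. apply memb_In, (subsets_incl l Q HQ) in E.
    contradiction. }
  assert (Hin : forall Q, F (a :: Q) = F Q).
  { intros Q. apply forallb_ext_in. intros x Hx.
    rewrite memb_cons_neq; auto. intros ->. contradiction. }
  assert (Hwith : count (fun Q => Bool.eqb (g a) (memb a (a :: Q)) && F (a :: Q)) (subsets l)
                  = if g a then 1%nat else 0%nat).
  { transitivity (count (fun Q => g a && F Q) (subsets l)).
    - apply count_ext; intros Q _. rewrite Hin. f_equal.
      unfold memb; cbn. rewrite pt_eqb_refl. destruct (g a); reflexivity.
    - destruct (g a); [exact IH|apply count_eq_0; reflexivity]. }
  assert (Hwithout : count (fun Q => Bool.eqb (g a) (memb a Q) && F Q) (subsets l)
                     = if g a then 0%nat else 1%nat).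
  { destruct (g a); [apply count_eq_0|rewrite <- IH; apply count_ext];
      intros Q HQ; rewrite Hout by auto; reflexivity. }
  change (count (fun Q => Bool.eqb (g a) (memb a (a :: Q)) && F (a :: Q)) (subsets l)
          + count (fun Q => Bool.eqb (g a) (memb a Q) && F Q) (subsets l) = 1)%nat.
  rewrite Hwith, Hwithout. destruct (g a); reflexivity.
Qed.

Lemma zrange_NoDup K : NoDup (zrange K).
Proof.
  unfold zrange. apply FinFun.Injective_map_NoDup; [|apply seq_NoDup].
  intros x y E. lia.
Qed.

Lemma ball_pts_NoDup r : NoDup (ball_pts r).
Proof. unfold ball_pts. apply NoDup_filter, NoDup_list_prod; apply zrange_NoDup. Qed.

Definition translate_in_V (P : list pt) (t : pt) : bool := forallb (fun x => inV (pt_add x t)) P.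

Lemma count_patches_containing r P t : incl P (ball_pts r) ->
  count (fun Q => patch_eqb r t Q) (filter (fun Q => inclb P Q) (subsets (ball_pts r)))
  = if translate_in_V P t then 1%nat else 0%nat.
Proof.
  intros HP. rewrite count_filter.
  transitivity (count (fun Q => translate_in_V P t && patch_eqb r t Q) (subsets (ball_pts r))).
  - apply count_ext. intros Q _. destruct (patch_eqb r t Q) eqn:E.
    2: now rewrite !Bool.andb_false_r.
    rewrite !Bool.andb_true_r. apply forallb_ext_in.
    intros x Hx. unfold patch_eqb in E. rewrite forallb_forall in E.
    specialize (E x (HP x Hx)). apply Bool.eqb_prop in E. auto.
  - destruct (translate_in_V P t); cbn.
    + apply count_subsets_indicator, ball_pts_NoDup.
    + apply count_eq_0; auto.
Qed.

Definition disc (N : nat) : list pt := ball_pts (INR N).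

Section PatchDensity.
Local Open Scope R_scope.

Definition disc_density (X : pt -> bool) (N : nat) : R :=
  INR (count X (disc N)) / INR (length (disc N)).

Lemma sum_dens_seq_containing r P N : incl P (ball_pts r) ->
  fold_right Rplus 0 (map (fun Q => dens_seq r Q N) (filter (fun Q => inclb P Q) (subsets (ball_pts r))))
  = disc_density (translate_in_V P) N.
Proof.
  intros HP. unfold dens_seq, disc_density, disc.
  set (n := INR (length (ball_pts (INR N)))).
  set (L := filter (fun Q => inclb P Q) (subsets (ball_pts r))).
  assert (Hsum : forall (u : list pt -> nat) (v : list pt -> R), (forall Q, v Q = INR (u Q) / n) ->
    fold_right Rplus 0 (map v L) = INR (list_sum (map u L)) / n).
  { intros u v Hv. induction L as [|Q L IH]; cbn [map fold_right]; rewrite ?list_sum_cons.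
    - cbn. unfold Rdiv; ring.
    - rewrite IH, plus_INR, Hv. unfold Rdiv; ring. }
  rewrite (Hsum (fun Q => count (fun t => patch_eqb r t Q) (ball_pts (INR N)))) by reflexivity.
  rewrite (list_sum_count_swap (fun Q t => patch_eqb r t Q)).
  rewrite <- (Nat.mul_1_l (count _ _)), <- list_sum_if_const.
  do 3 f_equal. apply map_ext. intros t. apply count_patches_containing, HP.
Qed.

Lemma Un_cv_const (c : R) : Un_cv (fun _ => c) c.
Proof. intros e He; exists 0%nat; intros; unfold R_dist; rewrite Rminus_diag, Rabs_R0; auto. Qed.

Lemma Un_cv_fold_right_Rplus {A} (u : A -> nat -> R) (lim : A -> R) l :
  (forall a, In a l -> Un_cv (u a) (lim a)) ->
  Un_cv (fun N => fold_right Rplus 0 (map (fun a => u a N) l)) (fold_right Rplus 0 (map lim l)).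
Proof.
  induction l as [|a l IH]; cbn; intros H.
  - apply Un_cv_const.
  - apply CV_plus; auto.
Qed.

Lemma Un_cv_disc_density_translate_in_V r P d : is_patch r P ->
  (forall Q, In Q (subsets (ball_pts r)) -> Un_cv (dens_seq r Q) (d Q)) ->
  Un_cv (disc_density (translate_in_V P)) (nuB r P d).
Proof.
  intros [t0 Ht0] Hd.
  assert (HP : incl P (ball_pts r)) by (intros x Hx; apply Ht0; auto).
  eapply Un_cv_ext; [intros N; apply (sum_dens_seq_containing r P N HP)|].
  apply Un_cv_fold_right_Rplus. intros Q HQ. apply filter_In in HQ. apply Hd; tauto.
Qed.

End PatchDensity.

(** * Lattice points in discs *)

Lemma zrange_In K z : (0 <= K)%Z -> In z (zrange K) <-> (- K <= z <= K)%Z.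
Proof.
  intros HK. unfold zrange. rewrite in_map_iff. split.
  - intros [n [<- Hn]]. apply in_seq in Hn. lia.
  - intros Hz. exists (Z.to_nat (z + K)). split; [lia|]. apply in_seq. lia.
Qed.

Lemma length_zrange K : length (zrange K) = Z.to_nat (2 * K + 1).
Proof. unfold zrange. rewrite length_map, length_seq. reflexivity. Qed.

Definition in_disc (N : nat) (t : pt) : bool :=
  (fst t * fst t + snd t * snd t <=? Z.of_nat N * Z.of_nat N)%Z.

Lemma inballb_INR N t : inballb (INR N) t = in_disc N t.
Proof.
  unfold inballb, in_disc. rewrite INR_IZR_INZ.
  destruct (Rle_dec _ _) as [H|H]; symmetry.
  - apply Z.leb_le, le_IZR. rewrite plus_IZR, !mult_IZR. lra.
  - apply Z.leb_gt. apply Z.nle_gt. intros H'. apply H.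
    apply IZR_le in H'. rewrite plus_IZR, !mult_IZR in H'. lra.
Qed.

Lemma up_INR N : up (INR N) = (Z.of_nat N + 1)%Z.
Proof. symmetry. apply up_tech; rewrite INR_IZR_INZ; [lra|]. rewrite plus_IZR. lra. Qed.

Lemma disc_eq_filter N :
  disc N = filter (in_disc N) (list_prod (zrange (Z.of_nat N + 1)) (zrange (Z.of_nat N + 1))).
Proof.
  unfold disc, ball_pts. rewrite up_INR, Z.abs_eq by lia.
  apply filter_ext. apply inballb_INR.
Qed.

Lemma In_disc N t : In t (disc N) <-> in_disc N t = true.
Proof.
  rewrite disc_eq_filter, filter_In. destruct t as [x y].
  rewrite (@in_prod_iff Z Z), !zrange_In by lia. unfold in_disc; cbn. rewrite Z.leb_le.
  split; [tauto|]. intros H. nia.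
Qed.

Lemma memb_disc N t : memb t (disc N) = in_disc N t.
Proof. apply Bool.eq_true_iff_eq. rewrite memb_In. apply In_disc. Qed.

Lemma disc_NoDup N : NoDup (disc N).
Proof. apply ball_pts_NoDup. Qed.

Lemma disc_coord_bound N t : In t (disc N) ->
  (Z.abs (fst t) <= Z.of_nat N /\ Z.abs (snd t) <= Z.of_nat N)%Z.
Proof. rewrite In_disc. unfold in_disc. rewrite Z.leb_le. intros H. split; nia. Qed.

(* The square of side [2 (N / 2) + 1 >= N] centred at the origin lies in the disc. *)
Lemma disc_length_ge N : (N * N <= length (disc N))%nat.
Proof.
  set (h := (Z.of_nat N / 2)%Z).
  assert (Hh : (0 <= h /\ Z.of_nat N <= 2 * h + 1 /\ 2 * h <= Z.of_nat N)%Z).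
  { unfold h. pose proof (Z.div_mod (Z.of_nat N) 2 ltac:(lia)).
    pose proof (Z.mod_pos_bound (Z.of_nat N) 2 ltac:(lia)). lia. }
  assert (Hsq : (length (list_prod (zrange h) (zrange h)) <= length (disc N))%nat).
  { apply NoDup_incl_length; [apply NoDup_list_prod; apply zrange_NoDup|].
    intros [x y] Hx. apply In_disc. apply (@in_prod_iff Z Z) in Hx.
    rewrite !zrange_In in Hx by lia. unfold in_disc; cbn. apply Z.leb_le. nia. }
  rewrite length_prod, length_zrange in Hsq. nia.
Qed.

Lemma mod_eq_close (m x x' : Z) : (0 <= x' - x < m)%Z -> (x mod m = x' mod m)%Z -> x = x'.
Proof.
  intros Hx E.
  assert (H0 : ((x' - x) mod m = 0)%Z) by (rewrite Zminus_mod, E, Z.sub_diag; apply Z.mod_0_l; lia).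
  rewrite Z.mod_small in H0; lia.
Qed.

(* Reduction mod [m] is injective on such a subset. *)
Lemma count_le_of_gap_lt (L : list Z) (p : Z -> bool) (m : Z) : NoDup L -> (1 <= m)%Z ->
  (forall x x', In x L -> In x' L -> p x = true -> p x' = true -> (x < x')%Z -> (x' - x < m)%Z) ->
  (count p L <= Z.to_nat m)%nat.
Proof.
  intros Hnd Hm H.
  assert (E : count (fun _ : nat => true) (seq 0 (Z.to_nat m)) = Z.to_nat m)
    by (unfold count; rewrite filter_true, length_seq; auto).
  rewrite <- E. apply count_injective_le with (h := fun x => Z.to_nat (x mod m)); auto.
  - intros x x' Hx Hx' px px' Ex.
    pose proof (Z.mod_pos_bound x m ltac:(lia)). pose proof (Z.mod_pos_bound x' m ltac:(lia)).
    assert (Em : (x mod m = x' mod m)%Z) by lia.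
    destruct (Z.lt_trichotomy x x') as [Hl|[Hl|Hl]]; auto.
    + apply mod_eq_close with m; auto. specialize (H x x' Hx Hx' px px' Hl). lia.
    + symmetry. apply mod_eq_close with m; auto. specialize (H x' x Hx' Hx px' px Hl). lia.
  - intros x _ _. split; auto. apply in_seq. pose proof (Z.mod_pos_bound x m ltac:(lia)). lia.
Qed.

(* Points of an "interval" [B] whose translate by [0 <= d <= m] leaves [B] lie in a window of
   length [m] at the right end. *)
Lemma count_exit_le (B : Z -> bool) (L : list Z) (d m : Z) :
  NoDup L -> (1 <= m)%Z -> (0 <= d <= m)%Z ->
  (forall x y, (x <= x + d <= y)%Z -> B x = true -> B y = true -> B (x + d)%Z = true) ->
  (count (fun x => B x && negb (B (x + d)%Z)) L <= Z.to_nat m)%nat.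
Proof.
  intros Hnd Hm Hd Hconv. apply count_le_of_gap_lt; auto.
  intros x x' _ _ H1 H2 Hl. apply Bool.andb_true_iff in H1, H2.
  destruct H1 as [B1 E1], H2 as [B2 _].
  destruct (Z_lt_le_dec (x' - x) m) as [|Hc]; auto.
  rewrite (Hconv x x') in E1; auto; [discriminate|lia].
Qed.

Lemma square_le_max_convex (x y z c R : Z) : (x <= y <= z)%Z ->
  (x * x + c <= R)%Z -> (z * z + c <= R)%Z -> (y * y + c <= R)%Z.
Proof.
  intros Hy Hx Hz. destruct (Z_le_gt_dec 0 y).
  - assert (y * y <= z * z)%Z by nia. lia.
  - assert (y * y <= x * x)%Z by nia. lia.
Qed.

Lemma disc_exit_count_le_x N (d m : Z) : (1 <= m)%Z -> (0 <= d <= m)%Z ->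
  (count (fun t => negb (memb (pt_add t (d, 0%Z)) (disc N))) (disc N) <= Z.to_nat m * (2 * N + 3))%nat.
Proof.
  intros Hm Hd. set (exits := fun t => negb (memb (pt_add t (d, 0%Z)) (disc N))).
  rewrite disc_eq_filter, count_filter, (@count_list_prod Z Z).
  rewrite (list_sum_count_swap (fun x y => in_disc N (x, y) && exits (x, y))).
  replace (2 * N + 3)%nat with (length (zrange (Z.of_nat N + 1))) by (rewrite length_zrange; lia).
  rewrite <- list_sum_const. apply list_sum_le. intros y _.
  set (B := fun x => in_disc N (x, y)).
  rewrite (count_ext _ (fun x => B x && negb (B (x + d)%Z)))
    by (intros x _; unfold B, exits; rewrite memb_disc; unfold pt_add; cbn; rewrite Z.add_0_r; reflexivity).
  apply count_exit_le; auto using zrange_NoDup.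
  intros x x' Hx; unfold B, in_disc; cbn; rewrite !Z.leb_le. apply square_le_max_convex. lia.
Qed.

Lemma disc_exit_count_le_y N (d m : Z) : (1 <= m)%Z -> (0 <= d <= m)%Z ->
  (count (fun t => negb (memb (pt_add t (0%Z, d)) (disc N))) (disc N) <= Z.to_nat m * (2 * N + 3))%nat.
Proof.
  intros Hm Hd. set (exits := fun t => negb (memb (pt_add t (0%Z, d)) (disc N))).
  rewrite disc_eq_filter, count_filter, (@count_list_prod Z Z).
  replace (2 * N + 3)%nat with (length (zrange (Z.of_nat N + 1))) by (rewrite length_zrange; lia).
  rewrite <- list_sum_const. apply list_sum_le. intros x _.
  set (B := fun y => in_disc N (x, y)).
  rewrite (count_ext _ (fun y => B y && negb (B (y + d)%Z)))
    by (intros y _; unfold B, exits; rewrite memb_disc; unfold pt_add; cbn; rewrite Z.add_0_r; reflexivity).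
  apply count_exit_le; auto using zrange_NoDup.
  intros y y' Hy; unfold B, in_disc; cbn; rewrite !Z.leb_le, !(Z.add_comm (x * x)).
  apply square_le_max_convex. lia.
Qed.

(** * Equidistribution of residue classes in discs *)

Definition residue (m : Z) (t : pt) : pt := (fst t mod m, snd t mod m)%Z.

Definition zseq (m : nat) : list Z := map Z.of_nat (seq 0 m).

Definition residues (m : nat) : list pt := list_prod (zseq m) (zseq m).

Lemma zseq_In m z : In z (zseq m) <-> (0 <= z < Z.of_nat m)%Z.
Proof.
  unfold zseq. rewrite in_map_iff. split.
  - intros [n [<- Hn]]. apply in_seq in Hn. lia.
  - intros Hz. exists (Z.to_nat z). split; [lia|]. apply in_seq. lia.
Qed.

Lemma residues_NoDup m : NoDup (residues m).
Proof.
  apply NoDup_list_prod; unfold zseq;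
    (apply FinFun.Injective_map_NoDup; [intros x y E; lia|apply seq_NoDup]).
Qed.

Lemma length_residues m : length (residues m) = (m * m)%nat.
Proof. unfold residues, zseq. rewrite (@length_prod Z Z), length_map, length_seq. reflexivity. Qed.

Lemma residues_In m a : In a (residues m) <-> (0 <= fst a < Z.of_nat m /\ 0 <= snd a < Z.of_nat m)%Z.
Proof. destruct a; unfold residues; rewrite (@in_prod_iff Z Z), !zseq_In; cbn; tauto. Qed.

Lemma residue_In m t : (1 <= m)%nat -> In (residue (Z.of_nat m) t) (residues m).
Proof.
  intros Hm. apply residues_In. unfold residue; cbn.
  pose proof (Z.mod_pos_bound (fst t) (Z.of_nat m) ltac:(lia)).
  pose proof (Z.mod_pos_bound (snd t) (Z.of_nat m) ltac:(lia)). lia.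
Qed.

Lemma residue_id m a : In a (residues m) -> residue (Z.of_nat m) a = a.
Proof.
  intros H. apply residues_In in H. destruct a as [a1 a2]; unfold residue; cbn in *.
  rewrite !Z.mod_small by lia. reflexivity.
Qed.

Lemma residue_add m a t d : residue m a = residue m t -> residue m (pt_add a d) = residue m (pt_add t d).
Proof.
  destruct a as [a1 a2], t as [t1 t2], d as [d1 d2]; unfold residue, pt_add; cbn.
  intros E; injection E; intros E2 E1.
  rewrite (Zplus_mod a1), (Zplus_mod t1), (Zplus_mod a2), (Zplus_mod t2), E1, E2. reflexivity.
Qed.

Definition residue_count (m N : nat) (a : pt) : nat :=
  count (fun t => pt_eqb a (residue (Z.of_nat m) t)) (disc N).

(* Translation by [d] maps the points of the disc in class [a] to points in class [a + d],
   except for those that leave the disc. *)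
Lemma count_residue_translate_le m a d N :
  (count (fun t => pt_eqb (residue m a) (residue m t)) (disc N) <=
   count (fun t => pt_eqb (residue m (pt_add a d)) (residue m t)) (disc N) +
   count (fun t => negb (memb (pt_add t d) (disc N))) (disc N))%nat.
Proof.
  rewrite (count_split _ (fun t => memb (pt_add t d) (disc N))). apply Nat.add_le_mono.
  - apply count_injective_le with (h := fun t => pt_add t d).
    + apply disc_NoDup.
    + intros [x1 x2] [y1 y2] _ _ _ _ E. unfold pt_add in E; cbn in E.
      injection E; intros. f_equal; lia.
    + intros t _ H. apply Bool.andb_true_iff in H. destruct H as [H1 H2].
      split; [apply memb_In; auto|]. apply pt_eqb_spec. apply pt_eqb_spec in H1.
      apply residue_add; auto.
  - apply count_le. intros t _ H. apply Bool.andb_true_iff in H. tauto.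
Qed.

Lemma residue_count_le m N a b : (1 <= m)%nat -> In a (residues m) -> In b (residues m) ->
  (residue_count m N a <= residue_count m N b + 2 * m * (2 * N + 3))%nat.
Proof.
  intros Hm Ha Hb. set (M := Z.of_nat m).
  set (d1 := ((fst b - fst a) mod M)%Z). set (d2 := ((snd b - snd a) mod M)%Z).
  assert (Hd1 : (0 <= d1 <= M)%Z) by (pose proof (Z.mod_pos_bound (fst b - fst a) M ltac:(lia)); unfold d1; lia).
  assert (Hd2 : (0 <= d2 <= M)%Z) by (pose proof (Z.mod_pos_bound (snd b - snd a) M ltac:(lia)); unfold d2; lia).
  unfold residue_count.
  rewrite (count_ext _ (fun t => pt_eqb (residue M a) (residue M t)))
    by (intros t _; unfold M; rewrite (residue_id m a Ha); auto).
  pose proof (count_residue_translate_le M a (d1, 0%Z) N) as S1.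
  pose proof (count_residue_translate_le M (pt_add a (d1, 0%Z)) (0%Z, d2) N) as S2.
  pose proof (disc_exit_count_le_x N d1 M ltac:(lia) Hd1) as B1.
  pose proof (disc_exit_count_le_y N d2 M ltac:(lia) Hd2) as B2.
  assert (Eb : residue M (pt_add (pt_add a (d1, 0%Z)) (0%Z, d2)) = b).
  { apply residues_In in Hb. destruct a as [a1 a2], b as [b1 b2]; unfold residue, pt_add, d1, d2; cbn in *.
    rewrite !Z.add_0_r, !Zplus_mod_idemp_r, !Z.add_sub_assoc, !Z.add_simpl_l, !Z.mod_small by lia.
    reflexivity. }
  rewrite Eb in S2. unfold M in *. rewrite Nat2Z.id in B1, B2. lia.
Qed.

Lemma list_sum_residue_count m N : (1 <= m)%nat ->
  list_sum (map (residue_count m N) (residues m)) = length (disc N).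
Proof.
  intros Hm. unfold residue_count.
  rewrite (list_sum_count_swap (fun a t => pt_eqb a (residue (Z.of_nat m) t))).
  rewrite <- (Nat.mul_1_l (length (disc N))), <- list_sum_const. apply list_sum_ext.
  intros t _. apply count_pt_eqb; [apply residues_NoDup|apply residue_In; auto].
Qed.

Definition periodic (m : nat) (X : pt -> bool) : Prop :=
  forall t, X t = X (residue (Z.of_nat m) t).

Lemma count_periodic m N X : (1 <= m)%nat -> periodic m X ->
  count X (disc N) = list_sum (map (fun a => if X a then residue_count m N a else 0%nat) (residues m)).
Proof.
  intros Hm HX. unfold residue_count.
  transitivity (list_sum (map (fun a => count (fun t => X a && pt_eqb a (residue (Z.of_nat m) t)) (disc N))
                              (residues m))).
  - rewrite (list_sum_count_swap (fun a t => X a && pt_eqb a (residue (Z.of_nat m) t))).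
    rewrite <- (Nat.mul_1_l (count X (disc N))), <- list_sum_if_const. apply list_sum_ext.
    intros t _. rewrite HX.
    transitivity (count (fun a => X (residue (Z.of_nat m) t) && pt_eqb a (residue (Z.of_nat m) t))
                        (residues m)).
    + destruct (X (residue (Z.of_nat m) t)); cbn.
      * symmetry. apply count_pt_eqb; [apply residues_NoDup|apply residue_In; auto].
      * symmetry. apply count_eq_0; auto.
    + apply count_ext. intros a _. destruct (pt_eqb a (residue (Z.of_nat m) t)) eqn:E.
      * apply pt_eqb_spec in E. subst. reflexivity.
      * rewrite !Bool.andb_false_r; reflexivity.
  - apply list_sum_ext. intros a _. destruct (X a); cbn; auto. apply count_eq_0; auto.
Qed.

(* Each of the [m^2] residue classes contains [|disc N| / m^2] points of the disc up to an error
   [D = O(m N)], hence so does any [m]-periodic set, weighted by its number [G] of classes. *)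
Lemma count_periodic_approx m N X : (1 <= m)%nat -> periodic m X ->
  let G := count X (residues m) in let n := length (disc N) in
  let D := (2 * m * (2 * N + 3))%nat in
  ((m * m) * count X (disc N) <= G * n + G * (m * m) * D /\
   G * n <= (m * m) * count X (disc N) + G * (m * m) * D)%nat.
Proof.
  intros Hm HX G n D.
  assert (Hsum : forall a, list_sum (map (fun _ => a) (residues m)) = (m * m * a)%nat)
    by (intros a; rewrite list_sum_const, length_residues; lia).
  assert (Up : forall a, In a (residues m) -> ((m * m) * residue_count m N a <= n + (m * m) * D)%nat).
  { intros a Ha. unfold n. rewrite <- (list_sum_residue_count m N Hm), <- !Hsum, <- list_sum_map_add.
    apply list_sum_le. intros b Hb. apply residue_count_le; auto. }
  assert (Lo : forall a, In a (residues m) -> (n <= (m * m) * (residue_count m N a + D))%nat).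
  { intros a Ha. unfold n. rewrite <- (list_sum_residue_count m N Hm), <- Hsum.
    apply list_sum_le. intros b Hb. apply residue_count_le; auto. }
  rewrite (count_periodic m N X Hm HX), <- list_sum_map_mul.
  split.
  - eapply Nat.le_trans.
    + apply (list_sum_le _ (fun a => if X a then (n + m * m * D)%nat else 0%nat)).
      intros a Ha. destruct (X a); [apply Up; auto|lia].
    + rewrite list_sum_if_const. unfold G. lia.
  - assert (E1 : (G * n = list_sum (map (fun a => if X a then n else 0) (residues m)))%nat)
      by (rewrite list_sum_if_const; unfold G; lia).
    assert (E2 : (G * (m * m) * D
                  = list_sum (map (fun a => if X a then m * m * D else 0) (residues m)))%nat)
      by (rewrite list_sum_if_const; unfold G; lia).
    rewrite E1, E2, <- list_sum_map_add. apply list_sum_le. intros a Ha. destruct (X a); [|lia].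
    specialize (Lo a Ha). lia.
Qed.

(** * Sieving by finitely many primes *)

Definition divb (p a : Z) : bool := (a mod p =? 0)%Z.

Definition pt_divb (p : Z) (x : pt) : bool := divb p (fst x) && divb p (snd x).

Definition sieved_by (p : Z) (P : list pt) (t : pt) : bool :=
  forallb (fun x => negb (pt_divb p (pt_add t x))) P.

Definition sieved (ps : list nat) (P : list pt) (t : pt) : bool :=
  forallb (fun p => sieved_by (Z.of_nat p) P t) ps.

Definition prod_nat (ps : list nat) : nat := fold_right Nat.mul 1%nat ps.

Definition residues_of (q : nat) (P : list pt) : list pt :=
  nodup pt_eq_dec (map (residue (Z.of_nat q)) P).

Lemma card_mod_residues_of q P : card_mod q P = length (residues_of q P).
Proof. reflexivity. Qed.

Lemma divb_spec p a : (p <> 0)%Z -> divb p a = true <-> (p | a)%Z.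
Proof. intros Hp. unfold divb. rewrite Z.eqb_eq. apply Z.mod_divide; auto. Qed.

Lemma divb_add_mul p a b : divb p (a + b * p) = divb p a.
Proof. unfold divb. rewrite Z_mod_plus_full. reflexivity. Qed.

Lemma mod_affine_inj (Q u v k k' : Z) : (1 <= Q)%Z -> Z.gcd Q v = 1%Z -> (0 <= k < Q)%Z -> (0 <= k' < Q)%Z ->
  ((u + v * k) mod Q = (u + v * k') mod Q)%Z -> k = k'.
Proof.
  intros HQ Hg Hk Hk' E.
  assert (H : (Q | v * (k - k'))%Z).
  { apply Z.mod_divide; [lia|]. replace (v * (k - k'))%Z with ((u + v * k) - (u + v * k'))%Z by ring.
    rewrite Zminus_mod, E, Z.sub_diag. reflexivity. }
  apply Z.gauss in H; auto.
  destruct (Z.eq_dec (k - k') 0) as [|Hne]; [lia|].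
  apply Zdivide_bounds in H; auto. lia.
Qed.

Lemma Permutation_residues_affine (q : nat) (u : pt) (v : Z) : (1 <= q)%nat -> Z.gcd (Z.of_nat q) v = 1%Z ->
  Permutation (map (fun k => residue (Z.of_nat q) (fst u + v * fst k, snd u + v * snd k)%Z) (residues q))
              (residues q).
Proof.
  intros Hq Hg. apply Permutation_map_same_l.
  - apply FinFun.Injective_map_NoDup_in; [|apply residues_NoDup].
    intros [k1 k2] [k1' k2'] Hk Hk' E. apply residues_In in Hk, Hk'. cbn in *.
    unfold residue in E; cbn in E. injection E; intros E2 E1.
    f_equal; eapply mod_affine_inj; eauto; lia.
  - intros y Hy. apply in_map_iff in Hy. destruct Hy as [k [<- _]]. apply residue_In; auto.
Qed.

Lemma sieved_by_residue P q t : (1 <= q)%Z -> sieved_by q P t = sieved_by q P (residue q t).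
Proof.
  intros Hq. unfold sieved_by. apply forallb_ext_in. intros x _.
  unfold pt_divb, divb, residue, pt_add; cbn. rewrite !Zplus_mod_idemp_l. reflexivity.
Qed.

Lemma prod_nat_cons p ps : prod_nat (p :: ps) = (p * prod_nat ps)%nat.
Proof. reflexivity. Qed.

Lemma prod_nat_divide p ps : In p ps -> Nat.divide p (prod_nat ps).
Proof.
  induction ps as [|a ps IH]; cbn [In]; [tauto|]. rewrite prod_nat_cons. intros [<-|H].
  - exists (prod_nat ps). lia.
  - destruct (IH H) as [r Hr]. exists (a * r)%nat. rewrite Hr. lia.
Qed.

Lemma prod_nat_pos ps : (forall p, In p ps -> 1 <= p)%nat -> (1 <= prod_nat ps)%nat.
Proof.
  induction ps as [|a ps IH]; intros H; [cbn; lia|]. rewrite prod_nat_cons.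
  specialize (IH (fun p Hp => H p (or_intror Hp))). specialize (H a (or_introl eq_refl)). nia.
Qed.

Lemma sieved_translate ps P (i k : pt) :
  sieved ps P (fst i + Z.of_nat (prod_nat ps) * fst k, snd i + Z.of_nat (prod_nat ps) * snd k)%Z
  = sieved ps P i.
Proof.
  unfold sieved. apply forallb_ext_in. intros p Hp. destruct (prod_nat_divide p ps Hp) as [r Hr].
  unfold sieved_by. apply forallb_ext_in. intros x _. unfold pt_divb, pt_add; cbn.
  rewrite Hr, Nat2Z.inj_mul.
  replace (fst i + Z.of_nat r * Z.of_nat p * fst k + fst x)%Z
    with (fst i + fst x + (Z.of_nat r * fst k) * Z.of_nat p)%Z by ring.
  replace (snd i + Z.of_nat r * Z.of_nat p * snd k + snd x)%Z
    with (snd i + snd x + (Z.of_nat r * snd k) * Z.of_nat p)%Z by ring.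
  rewrite !divb_add_mul. reflexivity.
Qed.

Lemma sieved_periodic ps P : (1 <= prod_nat ps)%nat -> periodic (prod_nat ps) (sieved ps P).
Proof.
  intros Hm t. set (m := Z.of_nat (prod_nat ps)).
  rewrite <- (sieved_translate ps P (residue m t) (fst t / m, snd t / m)%Z).
  f_equal. destruct t as [t1 t2]; unfold residue; cbn.
  pose proof (Z.div_mod t1 m ltac:(lia)). pose proof (Z.div_mod t2 m ltac:(lia)).
  f_equal; lia.
Qed.

Lemma div_mod_unique_nonneg (m i i' k k' : Z) : (0 <= i < m)%Z -> (0 <= i' < m)%Z ->
  (i + m * k = i' + m * k')%Z -> i = i' /\ k = k'.
Proof.
  intros Hi Hi' E.
  destruct (Z.lt_trichotomy k k') as [H|[H|H]].
  - assert (m * k + m <= m * k')%Z by nia. lia.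
  - subst. lia.
  - assert (m * k' + m <= m * k)%Z by nia. lia.
Qed.

Definition mix (m : Z) (ik : pt * pt) : pt :=
  (fst (fst ik) + m * fst (snd ik), snd (fst ik) + m * snd (snd ik))%Z.

Lemma Permutation_residues_mul q m : (1 <= q)%nat -> (1 <= m)%nat ->
  Permutation (map (mix (Z.of_nat m)) (list_prod (residues m) (residues q))) (residues (q * m)).
Proof.
  intros Hq Hm. apply NoDup_Permutation_bis.
  - apply FinFun.Injective_map_NoDup_in; [|apply NoDup_list_prod; apply residues_NoDup].
    intros [[i1 i2] [k1 k2]] [[i1' i2'] [k1' k2']] H H' E.
    apply in_prod_iff in H, H'. destruct H as [Hi Hk], H' as [Hi' Hk'].
    apply residues_In in Hi, Hk, Hi', Hk'. cbn in *. unfold mix in E; cbn in E.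
    injection E; intros E2 E1.
    destruct (div_mod_unique_nonneg (Z.of_nat m) i1 i1' k1 k1') as [-> ->]; try lia.
    destruct (div_mod_unique_nonneg (Z.of_nat m) i2 i2' k2 k2') as [-> ->]; try lia.
    reflexivity.
  - rewrite length_map, length_prod, !length_residues. nia.
  - intros y Hy. apply in_map_iff in Hy. destruct Hy as [[[i1 i2] [k1 k2]] [<- H]].
    apply in_prod_iff in H. destruct H as [Hi Hk]. apply residues_In in Hi, Hk. cbn in *.
    apply residues_In. unfold mix; cbn. rewrite Nat2Z.inj_mul. nia.
Qed.

Lemma mod_eq_iff_divb (Q x b : Z) : (1 <= Q)%Z -> (0 <= b < Q)%Z -> divb Q (- b + x) = (x mod Q =? b)%Z.
Proof.
  intros HQ Hb. apply Bool.eq_true_iff_eq. rewrite divb_spec, Z.eqb_eq by lia. split.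
  - intros [c Hc]. replace x with (b + c * Q)%Z by lia. rewrite Z_mod_plus_full. apply Z.mod_small; lia.
  - intros E. exists (x / Q)%Z. pose proof (Z.div_mod x Q ltac:(lia)). lia.
Qed.

Lemma sieved_by_opp P q b : (1 <= q)%nat -> In b (residues q) ->
  sieved_by (Z.of_nat q) P (- fst b, - snd b)%Z = negb (memb b (residues_of q P)).
Proof.
  intros Hq Hb. apply residues_In in Hb. destruct b as [b1 b2]; cbn in *.
  unfold sieved_by, pt_divb, pt_add; cbn.
  rewrite (forallb_ext_in _ (fun x => negb (pt_eqb (residue (Z.of_nat q) x) (b1, b2)))).
  - apply Bool.eq_true_iff_eq. rewrite Bool.negb_true_iff, <- Bool.not_true_iff_false, memb_In,
      forallb_forall. unfold residues_of. rewrite nodup_In, in_map_iff. split.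
    + intros H [x [Hx Hin]]. specialize (H x Hin). rewrite Hx, pt_eqb_refl in H. discriminate.
    + intros H x Hin. apply Bool.negb_true_iff, Bool.not_true_iff_false. intros E.
      apply pt_eqb_spec in E. eauto.
  - intros x _. rewrite !mod_eq_iff_divb by lia. f_equal.
    unfold residue; cbn. apply Bool.eq_true_iff_eq. rewrite Bool.andb_true_iff, !Z.eqb_eq, pt_eqb_spec.
    split; [intros [-> ->]; reflexivity|intros E; injection E; auto].
Qed.

Lemma count_sieved_by P q : (1 <= q)%nat ->
  count (sieved_by (Z.of_nat q) P) (residues q) = (q * q - card_mod q P)%nat.
Proof.
  intros Hq.
  assert (Hunit : Z.gcd (Z.of_nat q) (-1) = 1%Z)
    by (change (-1)%Z with (- (1))%Z; rewrite Z.gcd_opp_r; apply Z.gcd_1_r).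
  rewrite <- (Permutation_count _ _ _ (Permutation_residues_affine q (0%Z, 0%Z) (-1) Hq Hunit)).
  rewrite count_map. cbn.
  rewrite (count_ext _ (fun b => negb (memb b (residues_of q P)))).
  2: { intros b Hb. rewrite <- sieved_by_residue by lia. rewrite <- sieved_by_opp by auto. reflexivity. }
  pose proof (filter_length (fun b => memb b (residues_of q P)) (residues q)) as H.
  fold (count (fun b => memb b (residues_of q P)) (residues q)) in H.
  rewrite count_memb in H.
  - rewrite length_residues in H. rewrite card_mod_residues_of. unfold count. lia.
  - apply residues_NoDup.
  - apply NoDup_nodup.
  - intros y Hy. unfold residues_of in Hy. rewrite nodup_In, in_map_iff in Hy.
    destruct Hy as [x [<- _]]. apply residue_In; auto.
Qed.

Lemma gcd_prod_primes q ps : prime (Z.of_nat q) -> (forall p, In p ps -> prime (Z.of_nat p)) -> ~ In q ps ->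
  Z.gcd (Z.of_nat q) (Z.of_nat (prod_nat ps)) = 1%Z.
Proof.
  intros Hq; induction ps as [|p ps IH]; intros Hps Hn.
  - apply Z.gcd_1_r.
  - rewrite prod_nat_cons, Nat2Z.inj_mul. apply Zgcd_1_rel_prime. apply rel_prime_mult.
    + apply prime_rel_prime; auto. intros Hd. apply prime_div_prime in Hd; auto.
      * apply Hn; left; lia.
      * apply Hps; left; auto.
    + apply Zgcd_1_rel_prime. apply IH; [intros; apply Hps; right; auto|intro; apply Hn; right; auto].
Qed.

Lemma count_sieved_residues P ps : NoDup ps -> (forall p, In p ps -> prime (Z.of_nat p)) ->
  count (sieved ps P) (residues (prod_nat ps))
  = fold_right Nat.mul 1%nat (map (fun p => p * p - card_mod p P)%nat ps).
Proof.
  induction ps as [|q ps IH]; intros Hnd Hpr; [reflexivity|].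
  inversion Hnd as [|? ? Hq_ps Hnd']; subst.
  assert (Hq : prime (Z.of_nat q)) by (apply Hpr; left; auto).
  assert (Hq1 : (1 <= q)%nat) by (pose proof (prime_ge_2 _ Hq); lia).
  assert (Hps : forall p, In p ps -> prime (Z.of_nat p)) by (intros; apply Hpr; right; auto).
  assert (Hm : (1 <= prod_nat ps)%nat).
  { apply prod_nat_pos. intros p Hp. pose proof (prime_ge_2 _ (Hps p Hp)). lia. }
  set (m := prod_nat ps) in *. rewrite prod_nat_cons. fold m.
  rewrite <- (Permutation_count _ _ _ (Permutation_residues_mul q m Hq1 Hm)).
  rewrite count_map, (@count_list_prod pt pt). cbn [map fold_right].
  rewrite <- IH, <- list_sum_if_const by auto. apply list_sum_ext. intros i _.
  rewrite (count_ext _ (fun k => sieved ps P i &&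
      sieved_by (Z.of_nat q) P (residue (Z.of_nat q) (fst i + Z.of_nat m * fst k, snd i + Z.of_nat m * snd k)%Z))).
  2: { intros k _. unfold sieved at 1. cbn [forallb]. fold (sieved ps P).
       rewrite <- sieved_by_residue by lia. unfold m, mix; cbn.
       rewrite <- (sieved_translate ps P i k), Bool.andb_comm. reflexivity. }
  destruct (sieved ps P i); [|apply count_eq_0; reflexivity].
  change (count (fun k => sieved_by (Z.of_nat q) P
    (residue (Z.of_nat q) (fst i + Z.of_nat m * fst k, snd i + Z.of_nat m * snd k)%Z)) (residues q)
    = (q * q - card_mod q P))%nat.
  rewrite <- (count_map (sieved_by (Z.of_nat q) P)).
  rewrite (Permutation_count _ _ _ (Permutation_residues_affine q i (Z.of_nat m) Hq1
                                        (gcd_prod_primes q ps Hq Hps Hq_ps))).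
  apply count_sieved_by; auto.
Qed.

(** * Sieved translates that leave V *)

Definition small_primes (M : nat) : list nat := filter primeb (seq 2 M).

Lemma primeb_spec p : primeb p = true <-> prime (Z.of_nat p).
Proof. unfold primeb. destruct (prime_dec (Z.of_nat p)); split; intros; auto; discriminate. Qed.

Lemma small_primes_prime M p : In p (small_primes M) -> prime (Z.of_nat p).
Proof. unfold small_primes. rewrite filter_In. intros [_ H]. apply primeb_spec; auto. Qed.

Lemma small_primes_NoDup M : NoDup (small_primes M).
Proof. apply NoDup_filter, seq_NoDup. Qed.

Lemma prod_small_primes_pos M : (1 <= prod_nat (small_primes M))%nat.
Proof.
  apply prod_nat_pos. intros p Hp. pose proof (prime_ge_2 _ (small_primes_prime M p Hp)). lia.
Qed.

Lemma prime_divisor_exists (n : Z) : (2 <= n)%Z -> exists p, prime p /\ (p | n)%Z /\ (p <= n)%Z.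
Proof.
  intros Hn. remember (Z.to_nat n) as k eqn:Hk. revert n Hn Hk.
  induction k as [k IH] using (well_founded_induction lt_wf). intros n Hn Hk.
  destruct (prime_dec n) as [Hp|Hp].
  - exists n. split; auto. split; [apply Z.divide_refl|lia].
  - destruct (not_prime_divide n ltac:(lia) Hp) as [d [Hd Hdn]].
    destruct (IH (Z.to_nat d) ltac:(lia) d ltac:(lia) eq_refl) as [p [Hp' [Hpd Hpb]]].
    exists p. split; auto. split; [eapply Z.divide_trans; eauto|lia].
Qed.

Lemma pt_divb_of_divide_gcd g s : g <> 0%Z -> (g | Z.gcd (fst s) (snd s))%Z -> pt_divb g s = true.
Proof.
  intros Hg H. unfold pt_divb. rewrite Bool.andb_true_iff, !divb_spec by auto.
  split; eapply Z.divide_trans; eauto; [apply Z.gcd_divide_l|apply Z.gcd_divide_r].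
Qed.

(* Such a divisor has a prime factor that was sieved out. *)
Lemma sieved_no_small_divisor M P t x g : sieved (small_primes M) P t = true -> In x P ->
  (2 <= g <= Z.of_nat M + 1)%Z -> ~ (g | Z.gcd (fst (pt_add t x)) (snd (pt_add t x)))%Z.
Proof.
  intros Ht Hx Hg Hdiv. destruct (prime_divisor_exists g) as [p [Hp [Hpg Hple]]]; [lia|].
  pose proof (prime_ge_2 _ Hp).
  assert (Hin : In (Z.to_nat p) (small_primes M)).
  { apply filter_In. split; [apply in_seq; lia|apply primeb_spec; rewrite Z2Nat.id by lia; auto]. }
  unfold sieved in Ht. rewrite forallb_forall in Ht. specialize (Ht _ Hin).
  unfold sieved_by in Ht. rewrite forallb_forall in Ht. specialize (Ht x Hx).
  rewrite Z2Nat.id, pt_divb_of_divide_gcd in Ht by (eauto using Z.divide_trans; lia).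
  discriminate.
Qed.

Definition l1_radius (P : list pt) : nat :=
  fold_right (fun x acc => Nat.max acc (Z.to_nat (Z.abs (fst x)) + Z.to_nat (Z.abs (snd x)))) 0%nat P.

Lemma l1_radius_bound P x : In x P ->
  (Z.abs (fst x) <= Z.of_nat (l1_radius P) /\ Z.abs (snd x) <= Z.of_nat (l1_radius P))%Z.
Proof.
  induction P as [|y P IH]; [intros []|]. intros Hx.
  change (l1_radius (y :: P))
    with (Nat.max (l1_radius P) (Z.to_nat (Z.abs (fst y)) + Z.to_nat (Z.abs (snd y)))).
  destruct Hx as [<-|H]; [lia|specialize (IH H); lia].
Qed.

Lemma sieved_not_translate_in_V M N P t : In t (disc N) ->
  sieved (small_primes M) P t = true -> translate_in_V P t = false ->
  exists x, In x P /\ (pt_add t x = (0%Z, 0%Z) \/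
    exists g, In g (seq (M + 2) (N + l1_radius P)) /\ pt_divb (Z.of_nat g) (pt_add t x) = true).
Proof.
  intros Ht HA Hg. destruct (forallb_false_In _ _ Hg) as [x [Hx Hv]].
  exists x; split; auto. rewrite pt_add_comm in Hv. unfold inV in Hv. apply Z.eqb_neq in Hv.
  destruct (pt_add t x) as [a b] eqn:Es. cbn in Hv.
  destruct (pt_eq_dec (a, b) (0%Z, 0%Z)) as [E|Hnz]; [left; exact E|right].
  assert (Hab : (Z.abs a <= Z.of_nat N + Z.of_nat (l1_radius P) /\
                 Z.abs b <= Z.of_nat N + Z.of_nat (l1_radius P))%Z).
  { pose proof (l1_radius_bound P x Hx). pose proof (disc_coord_bound N t Ht).
    unfold pt_add in Es. injection Es. lia. }
  assert (Hab0 : a <> 0%Z \/ b <> 0%Z)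
    by (destruct (Z.eq_dec a 0), (Z.eq_dec b 0); auto; subst; contradiction).
  set (g0 := Z.gcd a b) in *.
  assert (G0 : (0 < g0)%Z).
  { pose proof (Z.gcd_nonneg a b). destruct (Z.eq_dec g0 0) as [E|]; [|lia].
    apply Z.gcd_eq_0 in E. lia. }
  assert (G1 : (g0 <= Z.of_nat N + Z.of_nat (l1_radius P))%Z).
  { destruct Hab0 as [Ha|Hb].
    - pose proof (Zdivide_bounds g0 a (Z.gcd_divide_l a b) Ha). lia.
    - pose proof (Zdivide_bounds g0 b (Z.gcd_divide_r a b) Hb). lia. }
  destruct (Z_le_gt_dec g0 (Z.of_nat M + 1)) as [Hs|Hs].
  - exfalso. apply (sieved_no_small_divisor M P t x g0 HA Hx); [lia|].
    rewrite Es. apply Z.divide_refl.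
  - exists (Z.to_nat g0). split; [apply in_seq; lia|].
    apply pt_divb_of_divide_gcd; rewrite Z2Nat.id; try lia. apply Z.divide_refl.
Qed.

Lemma translate_in_V_sieved M P t : translate_in_V P t = true -> sieved (small_primes M) P t = true.
Proof.
  intros H. unfold sieved. apply forallb_forall. intros p Hp. pose proof (small_primes_prime M p Hp) as Hpr.
  pose proof (prime_ge_2 _ Hpr).
  unfold sieved_by. apply forallb_forall. intros x Hx. unfold translate_in_V in H.
  rewrite forallb_forall in H. specialize (H x Hx). unfold inV in H. apply Z.eqb_eq in H.
  apply Bool.negb_true_iff, Bool.not_true_iff_false. intros E.
  unfold pt_divb in E. rewrite Bool.andb_true_iff, !divb_spec in E by lia.
  assert (Hd : (Z.of_nat p | Z.gcd (fst (pt_add x t)) (snd (pt_add x t)))%Z)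
    by (rewrite pt_add_comm; apply Z.gcd_greatest; tauto).
  rewrite H in Hd. apply Z.divide_pos_le in Hd; lia.
Qed.

Lemma count_multiples_zrange (g c K : Z) : (1 <= g)%Z -> (0 <= K)%Z ->
  (count (fun z => divb g (z + c)) (zrange K) <= Z.to_nat ((2 * K) / g) + 1)%nat.
Proof.
  intros Hg HK.
  assert (E : count (fun _ : nat => true) (seq 0 (Z.to_nat ((2 * K) / g) + 1))
              = (Z.to_nat ((2 * K) / g) + 1)%nat)
    by (unfold count; rewrite filter_true, length_seq; auto).
  rewrite <- E. apply count_injective_le with (h := fun z => Z.to_nat ((z + K) / g)).
  - apply zrange_NoDup.
  - intros z z' Hz Hz' H1 H2 Eq. apply zrange_In in Hz, Hz'; auto.
    apply divb_spec in H1, H2; try lia.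
    assert (Eq' : ((z + K) / g = (z' + K) / g)%Z).
    { assert (0 <= (z + K) / g)%Z by (apply Z.div_pos; lia).
      assert (0 <= (z' + K) / g)%Z by (apply Z.div_pos; lia). lia. }
    assert (Em : ((z + K) mod g = (z' + K) mod g)%Z).
    { destruct H1 as [u Hu], H2 as [v Hv].
      replace (z + K)%Z with ((K - c) + u * g)%Z by lia.
      replace (z' + K)%Z with ((K - c) + v * g)%Z by lia.
      rewrite !Z_mod_plus_full. reflexivity. }
    pose proof (Z.div_mod (z + K) g ltac:(lia)). pose proof (Z.div_mod (z' + K) g ltac:(lia)). lia.
  - intros z Hz _. split; auto. apply zrange_In in Hz; auto. apply in_seq.
    assert ((z + K) / g <= (2 * K) / g)%Z by (apply Z.div_le_mono; lia).
    assert (0 <= (z + K) / g)%Z by (apply Z.div_pos; lia). lia.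
Qed.

Definition multiples_bound (N g : nat) : nat :=
  (Z.to_nat ((2 * (Z.of_nat N + 1)) / Z.of_nat g) + 1)%nat.

Lemma count_pt_divb_disc N g x : (1 <= g)%nat ->
  (count (fun t => pt_divb (Z.of_nat g) (pt_add t x)) (disc N) <= multiples_bound N g * multiples_bound N g)%nat.
Proof.
  intros Hg. rewrite disc_eq_filter.
  eapply Nat.le_trans; [rewrite count_filter; apply count_le; intros t _ H;
                         apply Bool.andb_true_iff in H; exact (proj2 H)|].
  rewrite (@count_list_prod Z Z). unfold pt_divb, pt_add; cbn.
  eapply Nat.le_trans.
  - apply (list_sum_le _ (fun a => if divb (Z.of_nat g) (a + fst x) then multiples_bound N g else 0%nat)).
    intros a _. destruct (divb (Z.of_nat g) (a + fst x)); cbn.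
    + apply count_multiples_zrange; lia.
    + rewrite count_eq_0; auto.
  - rewrite list_sum_if_const. apply Nat.mul_le_mono_l. apply count_multiples_zrange; lia.
Qed.

Definition large_divisors (P : list pt) (M N : nat) : list nat := seq (M + 2) (N + l1_radius P).

Lemma count_sieved_not_translate_in_V_le P M N :
  (count (fun t => sieved (small_primes M) P t && negb (translate_in_V P t)) (disc N) <=
   length P * (1 + list_sum (map (fun g => multiples_bound N g * multiples_bound N g)
                                 (large_divisors P M N))))%nat.
Proof.
  rewrite Nat.mul_comm, <- list_sum_const.
  eapply Nat.le_trans.
  - apply (count_le_sum_cover _ (fun x t => pt_eqb (pt_add t x) (0%Z, 0%Z) ||
                                           existsb (fun g => pt_divb (Z.of_nat g) (pt_add t x))
                                                   (large_divisors P M N)) P).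
    intros t Ht H. apply Bool.andb_true_iff in H. destruct H as [H1 H2]. apply Bool.negb_true_iff in H2.
    destruct (sieved_not_translate_in_V M N P t Ht H1 H2) as [x [Hx [H|[g [Hg Hh]]]]];
      exists x; split; auto.
    + cbv beta. rewrite H, pt_eqb_refl. reflexivity.
    + cbv beta. apply Bool.orb_true_iff; right. apply existsb_exists. eauto.
  - apply list_sum_le. intros x _. eapply Nat.le_trans; [apply count_orb_le|]. apply Nat.add_le_mono.
    + assert (E : count (fun _ : pt => true) [(0%Z, 0%Z)] = 1%nat) by reflexivity. rewrite <- E.
      apply count_injective_le with (h := fun _ => (0%Z, 0%Z)); [apply disc_NoDup| |intros; split; [left|]; auto].
      intros [a1 a2] [b1 b2] _ _ E1 E2 _. apply pt_eqb_spec in E1, E2. unfold pt_add in *; cbn in *.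
      injection E1; injection E2; intros. f_equal; lia.
    + eapply Nat.le_trans; [apply (count_le_sum_cover _ (fun g t => pt_divb (Z.of_nat g) (pt_add t x))
                                                         (large_divisors P M N))|].
      * intros t _ H. apply existsb_exists in H. exact H.
      * apply list_sum_le. intros g Hg. apply count_pt_divb_disc.
        unfold large_divisors in Hg. apply in_seq in Hg. lia.
Qed.

Section Analysis.
Local Open Scope R_scope.

Lemma Un_cv_le_eventually (u v : nat -> R) l1 l2 N0 :
  Un_cv u l1 -> Un_cv v l2 -> (forall N, (N0 <= N)%nat -> u N <= v N) -> l1 <= l2.
Proof.
  intros Hu Hv H. destruct (Rle_dec l1 l2) as [|Hn]; auto. exfalso.
  set (e := (l1 - l2) / 2).
  destruct (Hu e ltac:(unfold e; lra)) as [N1 H1]. destruct (Hv e ltac:(unfold e; lra)) as [N2 H2].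
  set (N := (N0 + N1 + N2)%nat). specialize (H1 N ltac:(unfold N; lia)).
  specialize (H2 N ltac:(unfold N; lia)). specialize (H N ltac:(unfold N; lia)).
  unfold R_dist in *. apply Rabs_def2 in H1, H2. unfold e in *. lra.
Qed.

Lemma Un_cv_of_le_inv (u : nat -> R) l c :
  (forall N, (1 <= N)%nat -> Rabs (u N - l) <= c / INR N) -> Un_cv u l.
Proof.
  intros H e He.
  destruct (archimed (Rabs c / e)) as [Hup _].
  exists (Z.to_nat (up (Rabs c / e)) + 1)%nat. intros N HN. unfold R_dist.
  assert (HNpos : 0 < INR N) by (apply lt_0_INR; lia).
  assert (HNbig : Rabs c / e < INR N).
  { apply Rlt_le_trans with (IZR (up (Rabs c / e))); [lra|].
    destruct (Z_le_gt_dec 0 (up (Rabs c / e))) as [Hz|Hz].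
    - rewrite <- (Z2Nat.id (up _)), <- INR_IZR_INZ by lia. apply le_INR. lia.
    - apply Rle_trans with 0; [apply IZR_le; lia|lra]. }
  eapply Rle_lt_trans; [apply H; lia|].
  apply Rle_lt_trans with (Rabs c / INR N).
  - unfold Rdiv. apply Rmult_le_compat_r; [left; apply Rinv_0_lt_compat; auto|apply RRle_abs].
  - apply Rmult_lt_reg_r with (INR N); auto.
    replace (Rabs c / INR N * INR N) with (Rabs c) by (field; lra).
    replace (Rabs c) with ((Rabs c / e) * e) by (field; lra).
    rewrite (Rmult_comm e). apply Rmult_lt_compat_r; auto.
Qed.

Lemma Rdiv_le_num (a b c : R) : 0 < c -> a <= b -> a / c <= b / c.
Proof. intros Hc H. unfold Rdiv. apply Rmult_le_compat_r; auto. left; apply Rinv_0_lt_compat; auto. Qed.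

Lemma Rdiv_le_den (a b c : R) : 0 <= a -> 0 < b -> b <= c -> a / c <= a / b.
Proof. intros Ha Hb Hbc. unfold Rdiv. apply Rmult_le_compat_l; auto. apply Rinv_le_contravar; auto. Qed.

Lemma lin_over_sq_le (a b N : R) : 0 <= a -> 0 <= b -> 1 <= N -> (a * N + b) / (N * N) <= (a + b) / N.
Proof.
  intros Ha Hb HN. replace ((a + b) / N) with ((a * N + b * N) / (N * N)) by (field; lra).
  apply Rdiv_le_num; nra.
Qed.

Lemma disc_length_ge_R N : INR N * INR N <= INR (length (disc N)).
Proof. rewrite <- mult_INR. apply le_INR, disc_length_ge. Qed.

Lemma card_mod_le p P : (1 <= p)%nat -> (card_mod p P <= p * p)%nat.
Proof.
  intros Hp. rewrite card_mod_residues_of, <- length_residues.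
  apply NoDup_incl_length; [apply NoDup_nodup|].
  intros y Hy. unfold residues_of in Hy. rewrite nodup_In, in_map_iff in Hy.
  destruct Hy as [x [<- _]]. apply residue_In; auto.
Qed.

Lemma fold_right_Rmult_ratio P ps : (forall p, In p ps -> (1 <= p)%nat) ->
  fold_right Rmult 1 (map (fun p => 1 - INR (card_mod p P) / (INR p ^ 2)) ps) =
  INR (fold_right Nat.mul 1%nat (map (fun p => (p * p - card_mod p P)%nat) ps))
  / INR (prod_nat ps * prod_nat ps).
Proof.
  induction ps as [|p ps IH]; intros H; cbn [map fold_right].
  - cbn. field.
  - rewrite IH by (intros; apply H; right; auto). rewrite prod_nat_cons.
    assert (Hp : (1 <= p)%nat) by (apply H; left; auto).
    assert (Hm : (1 <= prod_nat ps)%nat) by (apply prod_nat_pos; intros; apply H; right; auto).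
    rewrite !mult_INR, minus_INR by (apply card_mod_le; auto). rewrite !mult_INR.
    assert (0 < INR p) by (apply lt_0_INR; lia). assert (0 < INR (prod_nat ps)) by (apply lt_0_INR; lia).
    field. lra.
Qed.

Lemma partial_prod_sieved_fraction P M :
  partial_prod P M = INR (count (sieved (small_primes M) P) (residues (prod_nat (small_primes M))))
                     / INR (prod_nat (small_primes M) * prod_nat (small_primes M)).
Proof.
  unfold partial_prod. fold (small_primes M). rewrite fold_right_Rmult_ratio.
  - rewrite count_sieved_residues; [reflexivity|apply small_primes_NoDup|apply small_primes_prime].
  - intros p Hp. pose proof (prime_ge_2 _ (small_primes_prime M p Hp)). lia.
Qed.

Lemma Rabs_ratio_sub_le (cA G n m2 E : R) : 0 < n -> 0 < m2 -> 0 <= E ->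
  m2 * cA <= G * n + m2 * E -> G * n <= m2 * cA + m2 * E -> Rabs (cA / n - G / m2) <= E / n.
Proof.
  intros Hn Hm HE H1 H2.
  replace (cA / n - G / m2) with ((m2 * cA - G * n) / (m2 * n)) by (field; lra).
  replace (E / n) with ((m2 * E) / (m2 * n)) by (field; lra).
  unfold Rdiv. rewrite Rabs_mult, (Rabs_pos_eq (/ (m2 * n))) by (left; apply Rinv_0_lt_compat; nra).
  apply Rmult_le_compat_r; [left; apply Rinv_0_lt_compat; nra|].
  apply Rabs_le. lra.
Qed.

Lemma Un_cv_disc_density_sieved P M :
  Un_cv (disc_density (sieved (small_primes M) P)) (partial_prod P M).
Proof.
  set (m := prod_nat (small_primes M)).
  assert (Hm : (1 <= m)%nat) by apply prod_small_primes_pos.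
  apply Un_cv_of_le_inv with (c := 10 * INR m ^ 3). intros N HN.
  unfold disc_density. rewrite partial_prod_sieved_fraction. fold m.
  destruct (count_periodic_approx m N (sieved (small_primes M) P) Hm (sieved_periodic _ P Hm)) as [E1 E2].
  set (cA := count (sieved (small_primes M) P) (disc N)) in *.
  set (G := count (sieved (small_primes M) P) (residues m)) in *.
  set (n := length (disc N)) in *. set (D := (2 * m * (2 * N + 3))%nat) in *.
  assert (HG : (G <= m * m)%nat) by (unfold G, count; rewrite <- length_residues; apply filter_length_le).
  apply le_INR in E1, E2, HG. rewrite !plus_INR, !mult_INR in E1, E2. rewrite mult_INR in HG.
  assert (HD : INR D = 4 * INR m * INR N + 6 * INR m).
  { unfold D. rewrite !mult_INR, !plus_INR, !mult_INR. cbn. ring. }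
  assert (HN1 : 1 <= INR N) by (apply (le_INR 1); auto).
  assert (Hn : INR N * INR N <= INR n) by apply disc_length_ge_R.
  assert (Hm1 : 1 <= INR m) by (apply (le_INR 1); auto).
  pose proof (pos_INR D). pose proof (pos_INR G).
  rewrite mult_INR.
  eapply Rle_trans; [apply (Rabs_ratio_sub_le _ _ _ _ (INR G * INR D)); nra|].
  eapply Rle_trans; [apply Rdiv_le_num; [nra|apply Rmult_le_compat_r; [lra|exact HG]]|].
  eapply Rle_trans; [apply (Rdiv_le_den _ (INR N * INR N)); [nra|nra|exact Hn]|].
  rewrite HD.
  replace (INR m * INR m * (4 * INR m * INR N + 6 * INR m))
    with ((4 * INR m ^ 3) * INR N + 6 * INR m ^ 3) by ring.
  replace (10 * INR m ^ 3) with (4 * INR m ^ 3 + 6 * INR m ^ 3) by ring.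
  apply lin_over_sq_le; auto; nra.
Qed.

Definition Rsum (l : list R) : R := fold_right Rplus 0 l.

Lemma INR_list_sum {A} (f : A -> nat) l : INR (list_sum (map f l)) = Rsum (map (fun x => INR (f x)) l).
Proof. induction l; cbn [map]; rewrite ?list_sum_cons; auto. cbn [Rsum fold_right]. rewrite plus_INR, IHl. auto. Qed.

Lemma Rsum_le {A} (f g : A -> R) l : (forall x, In x l -> f x <= g x) -> Rsum (map f l) <= Rsum (map g l).
Proof.
  induction l as [|a l IH]; cbn; intros H; [lra|].
  pose proof (H a (or_introl eq_refl)). specialize (IH (fun x Hx => H x (or_intror Hx))). unfold Rsum in IH. lra.
Qed.

Lemma inv_sq_add_inv_le (a : R) : 2 <= a -> / (a * a) + / a <= / (a - 1).
Proof.
  intros Ha. replace (/ (a * a) + / a) with ((a + 1) / (a * a)) by (field; lra).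
  replace (/ (a - 1)) with (1 / (a - 1)) by (field; lra).
  apply (Rmult_le_reg_r (a * a * (a - 1))); [nra|].
  replace ((a + 1) / (a * a) * (a * a * (a - 1))) with ((a + 1) * (a - 1)) by (field; lra).
  replace (1 / (a - 1) * (a * a * (a - 1))) with (a * a) by (field; lra). nra.
Qed.

(* Telescoping with [1/g^2 + 1/g <= 1/(g-1)]. *)
Lemma Rsum_inv_sq_le (c : R) a L : 0 <= c -> (2 <= a)%nat ->
  Rsum (map (fun g => c / (INR g * INR g) + 2) (seq a L)) <= c / INR (a - 1) + 2 * INR L.
Proof.
  intros Hc. revert a. induction L as [|L IH]; intros a Ha; cbn [seq map Rsum fold_right].
  - assert (0 < INR (a - 1)) by (apply lt_0_INR; lia).
    assert (0 <= c / INR (a - 1)) by (unfold Rdiv; apply Rmult_le_pos; auto; left; apply Rinv_0_lt_compat; auto).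
    cbn. lra.
  - specialize (IH (S a) ltac:(lia)). replace (S a - 1)%nat with a in IH by lia.
    assert (HA : 2 <= INR a) by (apply (le_INR 2); auto).
    rewrite (S_INR L), (minus_INR a 1) by lia. change (INR 1) with 1.
    assert (c / (INR a * INR a) + c / INR a <= c / (INR a - 1)).
    { unfold Rdiv. rewrite <- Rmult_plus_distr_l. apply Rmult_le_compat_l; auto.
      apply inv_sq_add_inv_le; auto. }
    unfold Rsum in *. lra.
Qed.

Lemma multiples_bound_le N g : (1 <= g)%nat ->
  INR (multiples_bound N g * multiples_bound N g) <= 8 * (INR N + 1) ^ 2 / (INR g * INR g) + 2.
Proof.
  intros Hg. unfold multiples_bound. set (q := ((2 * (Z.of_nat N + 1)) / Z.of_nat g)%Z).
  assert (Hq0 : (0 <= q)%Z) by (apply Z.div_pos; lia).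
  assert (Hq : (Z.of_nat g * q <= 2 * (Z.of_nat N + 1))%Z) by (apply Z.mul_div_le; lia).
  rewrite mult_INR, plus_INR, INR_IZR_INZ, Z2Nat.id by auto. cbn [INR].
  apply IZR_le in Hq. rewrite !mult_IZR, plus_IZR, <- !INR_IZR_INZ in Hq.
  set (x := IZR q) in *. set (gr := INR g) in *.
  assert (Hgr : 1 <= gr) by (apply (le_INR 1); auto).
  assert (Hx0 : 0 <= x) by (apply IZR_le in Hq0; auto).
  set (w := 4 * (INR N + 1) ^ 2 / (gr * gr)).
  assert (Hw : w * (gr * gr) = 4 * (INR N + 1) ^ 2) by (unfold w; field; lra).
  assert (Hxw : x * x <= w).
  { apply (Rmult_le_reg_r (gr * gr)); [nra|]. rewrite Hw.
    assert (Hsq : gr * x * (gr * x) <= 2 * (INR N + 1) * (2 * (INR N + 1)))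
      by (apply Rmult_le_compat; nra).
    nra. }
  replace (8 * (INR N + 1) ^ 2 / (gr * gr)) with (2 * w) by (unfold w; field; lra).
  clearbody x gr w. pose proof (Rle_0_sqr (x - 1)). unfold Rsqr in *. nra.
Qed.

Lemma count_sieved_not_translate_in_V_le_R P M N :
  INR (count (fun t => sieved (small_primes M) P t && negb (translate_in_V P t)) (disc N)) <=
  INR (length P) * (1 + 8 * (INR N + 1) ^ 2 / INR (M + 1) + 2 * (INR N + INR (l1_radius P))).
Proof.
  eapply Rle_trans; [apply le_INR, count_sieved_not_translate_in_V_le|].
  rewrite mult_INR, plus_INR, INR_list_sum. apply Rmult_le_compat_l; [apply pos_INR|].
  cbn [INR]. rewrite Rplus_assoc. apply Rplus_le_compat_l.
  eapply Rle_trans.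
  - apply (Rsum_le _ (fun g => 8 * (INR N + 1) ^ 2 / (INR g * INR g) + 2)).
    intros g Hg. unfold large_divisors in Hg. apply in_seq in Hg. apply multiples_bound_le. lia.
  - unfold large_divisors.
    eapply Rle_trans; [apply Rsum_inv_sq_le; [|lia]|].
    { apply Rmult_le_pos; [lra|apply pow_le]. pose proof (pos_INR N). lra. }
    replace (M + 2 - 1)%nat with (M + 1)%nat by lia. rewrite (plus_INR N). lra.
Qed.

Lemma disc_density_translate_in_V_le P M N : (1 <= N)%nat ->
  disc_density (translate_in_V P) N <= disc_density (sieved (small_primes M) P) N.
Proof.
  intros HN. unfold disc_density. apply Rdiv_le_num.
  - pose proof (disc_length_ge_R N). assert (1 <= INR N) by (apply (le_INR 1); auto). nra.
  - apply le_INR, count_le. intros t _. apply translate_in_V_sieved.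
Qed.

Definition tail_error (P : list pt) (N : nat) : R :=
  INR (length P) * (1 + 2 * (INR N + INR (l1_radius P))) / (INR N * INR N).

Lemma Un_cv_tail_error P : Un_cv (tail_error P) 0.
Proof.
  apply Un_cv_of_le_inv with (c := 2 * INR (length P) + INR (length P) * (1 + 2 * INR (l1_radius P))).
  intros N HN. rewrite Rminus_0_r. unfold tail_error.
  assert (HN1 : 1 <= INR N) by (apply (le_INR 1); auto).
  pose proof (pos_INR (length P)). pose proof (pos_INR (l1_radius P)).
  rewrite Rabs_pos_eq.
  - replace (INR (length P) * (1 + 2 * (INR N + INR (l1_radius P)))) with
      ((2 * INR (length P)) * INR N + INR (length P) * (1 + 2 * INR (l1_radius P))) by ring.
    apply lin_over_sq_le; auto; nra.
  - unfold Rdiv. apply Rmult_le_pos; [nra|]. left; apply Rinv_0_lt_compat; nra.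
Qed.

(* There are at most [8 |P| (N+1)^2 / (M+1) + O(N)] sieved points whose translate leaves [V],
   the disc has at least [N^2] points, and [8 (N+1)^2 <= 32 N^2]. *)
Lemma disc_density_sieved_le P M N : (1 <= N)%nat ->
  disc_density (sieved (small_primes M) P) N - 32 * INR (length P) / INR (M + 1) - tail_error P N
  <= disc_density (translate_in_V P) N.
Proof.
  intros HN. unfold disc_density, tail_error.
  pose proof (count_sieved_not_translate_in_V_le_R P M N) as HT.
  pose proof (count_split (sieved (small_primes M) P) (translate_in_V P) (disc N)) as Hs.
  assert (Hg : (count (fun t => sieved (small_primes M) P t && translate_in_V P t) (disc N)
                <= count (translate_in_V P) (disc N))%nat)
    by (apply count_le; intros t _ H; apply Bool.andb_true_iff in H; tauto).
  assert (HA : INR (count (sieved (small_primes M) P) (disc N)) <= INR (count (translate_in_V P) (disc N)) +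
      INR (count (fun t => sieved (small_primes M) P t && negb (translate_in_V P t)) (disc N))).
  { rewrite <- plus_INR. apply le_INR. lia. }
  pose proof (disc_length_ge_R N) as Hn.
  set (n := INR (length (disc N))) in *. set (p := INR (length P)) in *. set (mm := INR (M + 1)) in *.
  set (Nr := INR N) in *. set (Rr := INR (l1_radius P)) in *.
  set (cA := INR (count (sieved (small_primes M) P) (disc N))) in *.
  set (cG := INR (count (translate_in_V P) (disc N))) in *.
  set (T := INR (count (fun t => sieved (small_primes M) P t && negb (translate_in_V P t)) (disc N))) in *.
  assert (HN1 : 1 <= Nr) by (apply (le_INR 1); auto).
  assert (Hmm : 1 <= mm) by (apply (le_INR 1); lia).
  assert (Hp : 0 <= p) by apply pos_INR. assert (HR : 0 <= Rr) by apply pos_INR.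
  clearbody n p mm Nr Rr cA cG T.
  set (T1 := p * (8 * (Nr + 1) ^ 2 / mm)). set (T2 := p * (1 + 2 * (Nr + Rr))).
  assert (HT' : T <= T1 + T2) by (unfold T1, T2; nra).
  assert (Hnpos : 0 < n) by nra.
  assert (E1 : T1 / n <= 32 * p / mm).
  { unfold T1. replace (p * (8 * (Nr + 1) ^ 2 / mm) / n) with ((p / mm) * (8 * (Nr + 1) ^ 2 / n)) by (field; lra).
    replace (32 * p / mm) with ((p / mm) * 32) by (field; lra).
    apply Rmult_le_compat_l; [unfold Rdiv; apply Rmult_le_pos; auto; left; apply Rinv_0_lt_compat; lra|].
    apply (Rmult_le_reg_r n); auto.
    replace (8 * (Nr + 1) ^ 2 / n * n) with (8 * (Nr + 1) ^ 2) by (field; lra). nra. }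
  assert (E2 : T2 / n <= T2 / (Nr * Nr)) by (apply Rdiv_le_den; [unfold T2; nra|nra|auto]).
  assert (E3 : cA / n <= cG / n + T1 / n + T2 / n).
  { replace (cG / n + T1 / n + T2 / n) with ((cG + T1 + T2) / n) by (field; lra). apply Rdiv_le_num; auto; lra. }
  fold T2. lra.
Qed.

Lemma Rabs_partial_prod_sub_le P L M : Un_cv (disc_density (translate_in_V P)) L ->
  Rabs (partial_prod P M - L) <= 32 * INR (length P) / INR (M + 1).
Proof.
  intros Ha.
  assert (Hlo : partial_prod P M - 32 * INR (length P) / INR (M + 1) - 0 <= L).
  { apply (Un_cv_le_eventually (fun N => disc_density (sieved (small_primes M) P) N
                                   - 32 * INR (length P) / INR (M + 1) - tail_error P N)
                                (disc_density (translate_in_V P)) _ _ 1).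
    - apply CV_minus; [apply CV_minus|];
        auto using Un_cv_disc_density_sieved, Un_cv_const, Un_cv_tail_error.
    - exact Ha.
    - intros N HN. apply disc_density_sieved_le; auto. }
  assert (Hhi : L <= partial_prod P M).
  { apply (Un_cv_le_eventually _ _ _ _ 1 Ha (Un_cv_disc_density_sieved P M)).
    intros; apply disc_density_translate_in_V_le; auto. }
  assert (0 <= 32 * INR (length P) / INR (M + 1)).
  { unfold Rdiv. apply Rmult_le_pos; [pose proof (pos_INR (length P)); lra|].
    left; apply Rinv_0_lt_compat, lt_0_INR; lia. }
  apply Rabs_le. lra.
Qed.

End Analysis.

Open Scope R_scope.

Theorem corollaryA1 (rho : R) (P : list pt) (d : list pt -> R) :
  0 < rho ->
  is_patch rho P ->
  (forall Q, In Q (subsets (ball_pts rho)) -> Un_cv (dens_seq rho Q) (d Q)) ->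
  Un_cv (partial_prod P) (nuB rho P d).
Proof.
  intros _ Hpatch Hd.
  pose proof (Un_cv_disc_density_translate_in_V rho P d Hpatch Hd) as Hlim.
  apply Un_cv_of_le_inv with (c := 32 * INR (length P)). intros M HM.
  eapply Rle_trans; [apply Rabs_partial_prod_sub_le, Hlim|].
  apply Rdiv_le_den.
  - pose proof (pos_INR (length P)); lra.
  - apply lt_0_INR; lia.
  - apply le_INR; lia.
Qed.
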